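(* Let $F$ be a $p$-rigid field ($p$ odd, $F$ containing a primitive $p$th root of unity), let $a\in\dot F\setminus\dot F^p$ and $E=F(\sqrt[p]{a})$. Let $\epsilon\colon\dot F/\dot F^p\to\dot E/\dot E^p$ be the homomorphism induced by the inclusion $F\hookrightarrow E$. Then, as $\mathbb F_p$-vector spaces, $$\dot E/\dot E^p=\big\langle[\sqrt[p]{a}]_E\big\rangle\oplus\epsilon\big(\dot F/\dot F^p\big).$$
   Context: For a field $L$, $\dot L=L\setminus\{0\}$, $\dot L^p$ is the group of nonzero $p$th powers and $[x]_L=x\dot L^p$. An element $a\in\dot F\setminus\dot F^p$ is $p$-rigid if every element of $N_{F(\sqrt[p]{a})/F}(F(\sqrt[p]{a})^\times)$ lies in $\bigcup_{k=0}^{p-1}a^k\dot F^p$; $F$ is $p$-rigid if every element of $\dot F\setminus\dot F^p$ is $p$-rigid. *)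

From HB Require Import structures.
From mathcomp Require Import all_boot all_order all_algebra all_field.
Set Implicit Arguments. Unset Strict Implicit. Unset Printing Implicit Defensive.
Import GRing.Theory.
Local Open Scope ring_scope.

Definition is_ppow (K : fieldType) (p : nat) (x : K) : Prop :=
  exists y : K, y != 0 /\ x = y ^+ p.

(* Field norm N_{L/F}(x) = det of the F-linear map (v |-> v * x) on L. *)
Definition fnorm (F : fieldType) (L : fieldExtType F) (x : L) : F :=
  \det (passmx.mxof (vbasis fullv) (vbasis fullv) (amulr x)).

(* L is (a model of) F(alpha) with alpha^p = a *)
Definition is_pure_ext (F : fieldType) (p : nat) (a : F)
  (L : fieldExtType F) (alpha : L) : Prop :=
  alpha ^+ p = a%:A /\ (<<1; alpha>>%VS = fullv).

Definition p_rigid_elt (F : fieldType) (p : nat) (a : F) : Prop :=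
  a != 0 /\ ~ is_ppow p a /\
  forall (L : fieldExtType F) (alpha : L), is_pure_ext p a alpha ->
  forall x : L, x != 0 ->
  exists2 k : nat, (k < p)%N & exists2 c : F, is_ppow p c & fnorm x = a ^+ k * c.

Definition p_rigid_field (F : fieldType) (p : nat) : Prop :=
  forall a : F, a != 0 -> ~ is_ppow p a -> p_rigid_elt p a.

From HB Require Import structures.
From mathcomp Require Import all_boot all_order all_algebra all_field.
From mathcomp Require Import ring.
Set Implicit Arguments. Unset Strict Implicit. Unset Printing Implicit Defensive.
Import GRing.Theory.
Local Open Scope ring_scope.

(* We show E^* = <alpha> F^* E^*p, and that this decomposition is direct.
   - General facts: closure of a multiplicative predicate under coprime
     powers, and a closed form for iterating the "twist" s |-> f(s) s^m of a
     multiplicative map f, which for m = p - 1 and f^p = id is a p-th power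
     after p steps (this encodes (sigma - 1)^p = sigma^p - 1 = 0 mod p).
   - E/F is cyclic of degree p: X^p - a is the minimal polynomial of alpha and
     sigma : alpha |-> zeta alpha generates the Galois group; by Dedekind
     independence the determinant norm fnorm equals the product of conjugates,
     and Hilbert 90 holds.
   - Spanning: by rigidity N(x) = a^k d^p, so x / (alpha^k d) has norm 1 and
     by Hilbert 90 x is tau(s) = sigma(s) s^(p-1) modulo <alpha> F^* E^*p;
     iterating p times, tau^p(s) is a p-th power.
   - Directness: taking norms, alpha^k in F^* E^*p forces a^k in F^*p, hence
     p | k since a is not a p-th power. *)

(* A predicate closed under products and inverses that contains x^k and x^n
   for coprime k, n contains x itself (Bezout: x = (x^n)^q / (x^k)^u). *)
Lemma coprime_pow_closed (R : fieldType) (P : R -> Prop) (x : R) (k n : nat) :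
  (forall u v, P u -> P v -> P (u * v)) -> (forall u, P u -> P u^-1) ->
  x != 0 -> coprime n k -> P (x ^+ k) -> P (x ^+ n) -> P x.
Proof.
move=> PM PV x0 cnk Pk Pn.
have P1 : P 1 by rewrite -(mulfV (expf_neq0 k x0)); apply: PM => //; apply: PV.
have PX m v : P v -> P (v ^+ m).
  by move=> Pv; elim: m => [|m IH]; rewrite ?expr0 ?exprS //; apply: PM.
case: n cnk Pn => [|n] cnk Pn.
  by move: cnk; rewrite /coprime gcd0n => /eqP k1; rewrite k1 expr1 in Pk.
have [u _] := Bezoutl k (ltn0Sn n); rewrite (eqP cnk) => /divnK bez.
have -> : x = (x ^+ n.+1) ^+ ((1 + u * k) %/ n.+1) / (x ^+ k) ^+ u.
  rewrite -!exprM [(n.+1 * _)%N]mulnC bez exprD expr1 [(k * u)%N]mulnC mulfK //.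
  by rewrite expf_neq0.
by apply: PM; [apply: PX | apply: PV; apply: PX].
Qed.

(* The twist s |-> f(s) s^m of a map f; for f = sigma and m = p - 1 it
   represents sigma - 1 on the multiplicative group modulo p-th powers. *)
Definition twist (R : comPzRingType) (f : R -> R) (m : nat) (s : R) := f s * s ^+ m.

Section TwistedIteration.
Variables (R : comPzRingType) (f : R -> R).
Hypotheses (fM : forall u v, f (u * v) = f u * f v) (f1 : f 1 = 1).

Lemma iter_multiplicative i u v : iter i f (u * v) = iter i f u * iter i f v.
Proof. by elim: i => [|i IH] //=; rewrite IH fM. Qed.

Lemma iter_exp i u n : iter i f (u ^+ n) = iter i f u ^+ n.
Proof.
elim: n => [|n IH]; last by rewrite !exprS iter_multiplicative IH.
by rewrite !expr0; elim: i => [|i IH] //=; rewrite IH f1.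
Qed.

(* Pascal's rule, multiplicatively: the exponent pattern C(j,i) m^(j-i) of
   the j-fold twist propagates to j+1 under g_i |-> g_(i+1) * g_i^m. *)
Lemma prod_pascal (g : nat -> R) m j :
  \prod_(0 <= i < j.+1) (g i.+1 * g i ^+ m) ^+ ('C(j, i) * m ^ (j - i)) =
  \prod_(0 <= i < j.+2) g i ^+ ('C(j.+1, i) * m ^ (j.+1 - i)).
Proof.
under eq_bigr => i _ do rewrite exprMn -exprM.
rewrite big_split /= [RHS]big_nat_recl // bin0 mul1n subn0.
under [in RHS]eq_bigr => i _ do rewrite binS mulnDl exprD subSS.
rewrite big_split /= [X in _ * X]big_nat_recl // bin0 mul1n subn0 -expnS.
rewrite [X in _ = _ * (X * _)]big_nat_recr //= bin_small // mul0n expr0 mulr1.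
have -> : \prod_(0 <= i < j) g i.+1 ^+ (m * ('C(j, i.+1) * m ^ (j - i.+1))) =
          \prod_(0 <= i < j) g i.+1 ^+ ('C(j, i.+1) * m ^ (j - i)).
  by apply: eq_big_nat => i /andP[_ lt_ij]; rewrite mulnCA -expnS subnSK.
ring.
Qed.

Lemma iter_twist m j s :
  iter j (twist f m) s = \prod_(0 <= i < j.+1) iter i f s ^+ ('C(j, i) * m ^ (j - i)).
Proof.
elim: j s => [|j IH] s; first by rewrite big_nat1 expr1.
rewrite iterSr IH -(prod_pascal (fun i => iter i f s)).
by apply: eq_bigr => i _; rewrite /twist iter_multiplicative iter_exp -iterSr.
Qed.

(* For a prime p and an f of order dividing p at s, the p-fold twist with
   m = p - 1 is a p-th power: p divides C(p,i) for 0 < i < p, and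
   p divides (p-1)^p + 1 by Fermat's little theorem. *)
Lemma iter_twist_prime p s : prime p -> iter p f s = s ->
  exists y, iter p (twist f p.-1) s = y ^+ p.
Proof.
move=> p_pr fps; have p_gt0 := prime_gt0 p_pr.
have dvd_ends : (p %| (p.-1 ^ p).+1)%N.
  rewrite /dvdn -addn1 -modnDml fermat_little // modnDml addn1 prednK //.
  by rewrite modnn.
exists (s ^+ ((p.-1 ^ p).+1 %/ p) *
  \prod_(1 <= i < p) iter i f s ^+ ('C(p, i) %/ p * p.-1 ^ (p - i))).
rewrite iter_twist big_nat_recr //= big_ltn //= bin0 binn subn0 subnn.
rewrite expn0 mul1n muln1 expr1 fps mulrAC -exprSr exprMn -prodrXl -exprM divnK //.
congr (_ * _); apply: eq_big_nat => i /andP[i_gt0 i_lt_p].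
by rewrite -exprM mulnAC divnK // prime_dvd_bin // i_gt0.
Qed.
End TwistedIteration.

Section KummerExtension.
Variables (F : fieldType) (p : nat) (zeta a : F) (E : fieldExtType F) (alpha : E).
Hypotheses (p_prime : prime p) (zeta_prim : p.-primitive_root zeta)
  (a_nz : a != 0) (a_npow : ~ is_ppow p a) (hE : is_pure_ext p a alpha).

Let p_gt0 : (0 < p)%N := prime_gt0 p_prime.

Lemma alpha_p : alpha ^+ p = a%:A. Proof. by case: hE. Qed.

Lemma alpha_gen : <<1; alpha>>%VS = fullv. Proof. by case: hE. Qed.

Lemma alpha_nz : alpha != 0.
Proof.
apply: contra_neq a_nz => alpha0; move: alpha_p.
rewrite alpha0 expr0n gtn_eqF // => /esym/eqP.
by rewrite scaler_eq0 oner_eq0 orbF => /eqP.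
Qed.

Lemma alg_nz (f : F) : f != 0 -> f%:A != 0 :> E.
Proof. by move=> f0; rewrite scaler_eq0 (negPf f0) oner_eq0. Qed.

Lemma algM (f g : F) : (f * g)%:A = f%:A * g%:A :> E.
Proof. by rewrite mulr_algl scalerA. Qed.

Let z : E := zeta%:A.

Lemma z_prim : p.-primitive_root z.
Proof. by rewrite /z (_ : zeta%:A = in_alg E zeta) // fmorph_primitive_root. Qed.

Lemma z_in1 i : z ^+ i \in 1%VS.
Proof. by rewrite rpredX // rpredZ ?mem1v. Qed.

Lemma z_nz : z != 0.
Proof.
apply: contra_eq_neq (prim_expr_order z_prim) => ->.
by rewrite expr0n gtn_eqF // eq_sym oner_eq0.
Qed.

Lemma zexp_inj i j : (i < p)%N -> (j < p)%N -> z ^+ i = z ^+ j -> i = j.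
Proof.
by move=> ip jp /eqP; rewrite (eq_prim_root_expr z_prim) !modn_small // => /eqP.
Qed.

(* alpha generates E of degree p: a power alpha^n lies in F only if p | n,
   since otherwise alpha itself would lie in F and a would be a p-th power. *)
Lemma alpha_pow_in1 n : alpha ^+ n \in 1%VS -> (p %| n)%N.
Proof.
move=> an1; have [//|p_ndvd_n] := boolP (p %| n)%N; exfalso; apply: a_npow.
have /vlineP[c ac] : alpha \in 1%VS.
  apply: (@coprime_pow_closed E (fun v => v \in 1%VS) alpha n p) => //.
  - by move=> u v; apply: rpredM.
  - by move=> u /= u1; rewrite (memvV (1%AS : {subfield E})).
  - exact: alpha_nz.
  - by rewrite prime_coprime.
  - by rewrite alpha_p rpredZ ?mem1v.
have ea : a = c ^+ p.
  by apply: (fmorph_inj (in_alg E)); rewrite rmorphXn /= -alpha_p ac.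
exists c; split => //; apply: contra_neq a_nz => c0.
by rewrite ea c0 expr0n gtn_eqF.
Qed.

Let kummer : {poly E} := 'X^p - (a%:A)%:P.

Lemma kummer_prod : kummer = \prod_(i <- iota 0 p) ('X - (z ^+ i * alpha)%:P).
Proof.
rewrite -(big_map (fun i => z ^+ i * alpha) xpredT (fun w => 'X - w%:P)).
rewrite {1}(@all_roots_prod_XsubC _ kummer [seq z ^+ i * alpha | i <- iota 0 p]).
- by rewrite lead_coefXnsubC // scale1r.
- by rewrite size_XnsubC // size_map size_iota.
- apply/allP=> _ /mapP[i _ ->]; rewrite /kummer rootE !hornerE.
  by rewrite exprMn exprAC (prim_expr_order z_prim) expr1n mul1r alpha_p subrr.
- rewrite uniq_rootsE map_inj_in_uniq ?iota_uniq // => i j.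
  rewrite !mem_iota !add0n => /andP[_ ip] /andP[_ jp] /(mulIf alpha_nz).
  exact: zexp_inj.
Qed.

Lemma minPoly_dvd_kummer : minPoly 1%AS alpha %| kummer.
Proof.
apply: minPoly_dvdp; first by rewrite /kummer polyOverXnsubC rpredZ ?mem1v.
by rewrite /kummer rootE !hornerE alpha_p subrr.
Qed.

(* X^p - a is the minimal polynomial of alpha: a monic factor
   \prod_(i <- r) ('X - z^i alpha) over F has constant term
   +- (a root of unity) * alpha^(size r) in F, forcing size r = p. *)
Lemma adjoin_degree_alpha : adjoin_degree 1%AS alpha = p.
Proof.
have := minPoly_dvd_kummer; rewrite kummer_prod => /dvdp_prod_XsubC[msk].
set r := mask msk (iota 0 p) => hm.
have mE : minPoly 1%AS alpha = \prod_(i <- r) ('X - (z ^+ i * alpha)%:P).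
  by apply/eqP; rewrite -eqp_monic ?monic_minPoly ?monic_prod_XsubC.
have dE : adjoin_degree 1%AS alpha = size r.
  by have := size_minPoly 1%AS alpha; rewrite mE size_prod_XsubC => -[].
have deg_le_p : (size r <= p)%N.
  rewrite -dE -ltnS -(size_XnsubC (a%:A : E) p_gt0) -size_minPoly.
  by rewrite dvdp_leq ?minPoly_dvd_kummer // -size_poly_eq0 size_XnsubC.
have p_dvd_deg : (p %| size r)%N.
  have := polyOverP (minPolyOver 1%AS alpha) 0.
  rewrite mE -(big_map (fun i => z ^+ i * alpha) xpredT (fun w => 'X - w%:P)).
  rewrite coef0_prod_XsubC big_map size_map big_split /=.
  rewrite [X in _ * (_ * X)](big_nth 0%N) prodr_const_nat subn0.
  rewrite mulrA; set c := _ * \prod_(i <- r) _ => c_alpha1.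
  have c1 : c \in 1%VS.
    by rewrite rpredM ?rpredX ?rpredN ?mem1v ?rpred_prod // => i _; apply: z_in1.
  have c_nz : c != 0.
    rewrite mulf_neq0 ?signr_eq0 // prodf_seq_neq0.
    by apply/allP => i _; rewrite expf_neq0 ?z_nz.
  apply: alpha_pow_in1; rewrite -(mulKf c_nz (alpha ^+ size r)) rpredM //.
  by rewrite (memvV (1%AS : {subfield E})).
have deg_gt0 : (0 < size r)%N by rewrite -dE.
by rewrite dE; apply/eqP; rewrite eqn_leq deg_le_p dvdn_leq.
Qed.

Lemma dim_E : \dim (fullv : {vspace E}) = p.
Proof. by rewrite -alpha_gen dim_Fadjoin adjoin_degree_alpha dimv1 muln1. Qed.

Lemma minPoly_alpha : minPoly 1%AS alpha = kummer.
Proof.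
apply/eqP; rewrite -eqp_monic ?monic_minPoly ?monicXnsubC //.
rewrite -dvdp_size_eqp ?minPoly_dvd_kummer // size_minPoly adjoin_degree_alpha.
by rewrite size_XnsubC.
Qed.

Definition sig1 : 'End(E) := kHomExtend 1%AS \1%VF alpha (z * alpha).

Lemma root_z_alpha : root (map_poly \1%VF (minPoly 1%AS alpha)) (z * alpha).
Proof.
rewrite (kHom_poly_id (kHom1 1%AS 1%AS) (minPolyOver 1%AS alpha)) minPoly_alpha.
by rewrite rootE !hornerE exprMn (prim_expr_order z_prim) mul1r alpha_p subrr.
Qed.

Lemma sig1_hom : kHom 1%AS fullv sig1.
Proof. by rewrite -alpha_gen; apply: kHomExtendP (kHom1 1%AS 1%AS) root_z_alpha. Qed.

Definition sig (k : nat) : 'End(E) := iter k (fun f => (sig1 \o f)%VF) \1%VF.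
Arguments sig k : simpl never.

Lemma sig_iter k v : sig k v = iter k (sig 1) v.
Proof.
have sig1E w : sig 1 w = sig1 w by rewrite /sig /= comp_lfunE id_lfunE.
elim: k => [|k IH]; first by rewrite /sig /= id_lfunE.
by rewrite iterS -IH sig1E /sig iterS comp_lfunE.
Qed.

Lemma sig_succ k v : sig 1 (sig k v) = sig k.+1 v.
Proof. by rewrite !sig_iter. Qed.

Lemma sig_hom k : kHom 1%AS fullv (sig k).
Proof. by elim: k => [|k IH]; [apply: kHom1 | apply: comp_kHom sig1_hom IH]. Qed.

Lemma sig_mul k u v : sig k (u * v) = sig k u * sig k v.
Proof. by have [_ ->] := kHomP_tmp (sig_hom k); rewrite ?memvf. Qed.

Lemma sig_alg k (c : F) : sig k c%:A = c%:A.
Proof. by have [-> //] := kHomP_tmp (sig_hom k); rewrite rpredZ ?mem1v. Qed.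

Lemma sig_one k : sig k 1 = 1.
Proof. by rewrite -(scale1r (1 : E)) sig_alg. Qed.

Lemma sig_exp k u n : sig k (u ^+ n) = sig k u ^+ n.
Proof. by elim: n => [|n IH]; rewrite ?sig_one // !exprS sig_mul IH. Qed.

Lemma sig_inv k u : sig k u^-1 = (sig k u)^-1.
Proof. exact: (kHom_inv (sig_hom k) (memvf u)). Qed.

Lemma sig_eq0 k v : (sig k v == 0) = (v == 0).
Proof.
apply/idP/idP => [|/eqP->]; last by rewrite linear0.
apply: contraLR => v0; apply/negP => /eqP sv0; have := sig_mul k v v^-1.
by rewrite mulfV // sig_one sv0 mul0r => /eqP; rewrite oner_eq0.
Qed.

Lemma sig_alpha k : sig k alpha = z ^+ k * alpha.
Proof.
elim: k => [|k IH]; first by rewrite /= lfunE mul1r.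
have [sig1F sig1M] := kHomP_tmp sig1_hom.
rewrite /= comp_lfunE IH sig1M ?memvf // sig1F ?z_in1 //.
by rewrite (kHomExtend_val (kHom1 1%AS 1%AS) root_z_alpha) mulrA -exprSr.
Qed.

(* sigma has order p: sig p fixes alpha, hence all of E = F(alpha). *)
Lemma sig_p v : sig p v = v.
Proof.
have : v \in <<1%AS; alpha>>%VS by rewrite alpha_gen memvf.
case/Fadjoin_polyP => q q1 ->.
rewrite (kHom_horner (sig_hom p)) ?memvf //; last first.
  by apply/polyOverP => i; rewrite memvf.
by rewrite (kHom_poly_id (sig_hom p)) // sig_alpha (prim_expr_order z_prim) mul1r.
Qed.

Lemma geo_sum_root (y : E) : y ^+ p = 1 ->
  \sum_(j < p) y ^+ j = if y == 1 then p%:R else 0.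
Proof.
move=> yp; have [->|y1] := eqVneq y 1.
  by rewrite (eq_bigr (fun _ => 1)) => [|j _]; rewrite ?expr1n // sumr_const card_ord.
apply/eqP; have := subrX1 y p; rewrite yp subrr => /esym/eqP.
by rewrite mulf_eq0 subr_eq0 (negPf y1).
Qed.

Lemma char_sum k m : (k < p)%N -> (m < p)%N ->
  \sum_(j < p) z ^+ ((p.-1 * m + k) * j) = if k == m then p%:R else 0.
Proof.
move=> kp mp; under eq_bigr => j _ do rewrite exprM.
rewrite geo_sum_root; last by rewrite -exprM mulnC exprM (prim_expr_order z_prim) expr1n.
have -> : (z ^+ (p.-1 * m + k) == 1) = (k == m); last by [].
rewrite -(inj_eq (mulIf (expf_neq0 m z_nz))) mul1r -exprD.
rewrite -addnA [(k + m)%N]addnC addnA -mulSnr prednK // exprD exprM.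
by rewrite (prim_expr_order z_prim) expr1n mul1r; apply/eqP/eqP => [/zexp_inj-> | ->].
Qed.

(* Dedekind independence of sig 0, ..., sig (p-1), in the strong form that
   testing on the powers of alpha suffices: sig k (alpha^j) = z^(k j) alpha^j. *)
Lemma sig_indep n (w : 'I_n -> E) : (n <= p)%N ->
  (forall j : 'I_p, \sum_(k < n) w k * sig k (alpha ^+ j) = 0) -> forall k, w k = 0.
Proof.
move=> n_le_p hw m; have ltp (k : 'I_n) : (k < p)%N := leq_trans (ltn_ord k) n_le_p.
have hz (j : 'I_p) : \sum_(k < n) w k * z ^+ (k * j) = 0.
  apply/eqP; rewrite -(mulIr_eq0 _ (mulIf (expf_neq0 j alpha_nz))) mulr_suml.
  apply/eqP; rewrite -[RHS](hw j); apply: eq_bigr => k _.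
  by rewrite sig_exp sig_alpha exprMn -exprM mulrA.
have : \sum_(j < p) z ^+ (p.-1 * m * j) * (\sum_(k < n) w k * z ^+ (k * j)) = 0.
  by rewrite big1 // => j _; rewrite hz mulr0.
under eq_bigr => j _ do rewrite mulr_sumr.
rewrite exchange_big /=.
have inner (k : 'I_n) : \sum_(j < p) z ^+ (p.-1 * m * j) * (w k * z ^+ (k * j)) =
    w k * (if k == m :> nat then p%:R else 0).
  rewrite -char_sum // mulr_sumr; apply: eq_bigr => j _.
  by rewrite mulrCA -exprD mulnDl.
under eq_bigr => k _ do rewrite inner.
rewrite (bigD1 m) //= eqxx big1 => [|k km]; last by rewrite (inj_eq val_inj) (negPf km) mulr0.
by rewrite addr0 => /eqP; rewrite mulf_eq0 (negPf (prim_root_natf_neq0 z_prim)) orbF => /eqP.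
Qed.

Let n := \dim (fullv : {vspace E}).
Let e := vbasis (fullv : {vspace E}).

Lemma det_conjugates : \det (\matrix_(k < n, i < n) sig k e`_i) != 0.
Proof.
apply/negP => /det0P[w w_nz wX]; move/negP: w_nz; apply.
apply/eqP/rowP => k; rewrite mxE; apply: (sig_indep (w := fun k => w 0 k)).
  by rewrite /n dim_E.
move=> j; rewrite (coord_vbasis (memvf (alpha ^+ j))).
under eq_bigr => k' _ do rewrite linear_sum mulr_sumr.
rewrite exchange_big big1 //= => i _.
under eq_bigr => k' _ do rewrite linearZ /= -scalerAr.
rewrite -scaler_sumr; move/rowP/(_ i): wX; rewrite !mxE.
by under eq_bigr => k' _ do rewrite mxE; move=> ->; rewrite scaler0.
Qed.

Definition galnorm (u : E) := \prod_(k < p) sig k u.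

(* The determinant norm of the statement is the Galois norm: the matrix of
   multiplication by x is diagonalised by the conjugates of the basis. *)
Lemma fnorm_galnorm (x : E) : (fnorm x)%:A = galnorm x.
Proof.
set A := passmx.mxof e e (amulr x).
pose X : 'M[E]_n := \matrix_(k, i) sig k e`_i.
have diagX : X *m (map_mx (in_alg E) A)^T = diag_mx (\row_(k < n) sig k x) *m X.
  apply/matrixP => k i; rewrite mul_diag_mx !mxE.
  under eq_bigr => j _ do
    rewrite !mxE passmx.vecof_delta /amulr lfunE /= mulr_algr -linearZ.
  by rewrite -linear_sum /= -(coord_vbasis (memvf (e`_i * x))) sig_mul mulrC.
have := congr1 determinant diagX.
rewrite !det_mulmx det_tr det_map_mx det_diag [RHS]mulrC.
move=> /(mulfI det_conjugates) /= ->; under eq_bigr => k _ do rewrite mxE.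
by rewrite /galnorm -(big_mkord xpredT (fun k => sig k x)) /n dim_E big_mkord.
Qed.

Lemma galnorm_mul u v : galnorm (u * v) = galnorm u * galnorm v.
Proof. by rewrite -big_split; apply: eq_bigr => k _; rewrite sig_mul. Qed.

Lemma galnorm_inv u : galnorm u^-1 = (galnorm u)^-1.
Proof. by rewrite /galnorm -prodfV; apply: eq_bigr => k _; rewrite sig_inv. Qed.

Lemma galnorm_exp u m : galnorm (u ^+ m) = galnorm u ^+ m.
Proof. by rewrite /galnorm -prodrXl; apply: eq_bigr => k _; rewrite sig_exp. Qed.

Lemma galnorm_alg (c : F) : galnorm c%:A = (c ^+ p)%:A.
Proof.
rewrite /galnorm (eq_bigr (fun _ => c%:A)) => [|k _]; last by rewrite sig_alg.
by rewrite prodr_const card_ord exprZn expr1n.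
Qed.

(* For p odd the conjugates z^k alpha multiply to z^C(p,2) a = a. *)
Lemma galnorm_alpha : odd p -> galnorm alpha = a%:A.
Proof.
move=> p_odd; have p_gt2 : (0 < 2 < p)%N.
  by have := prime_gt1 p_prime; case: (p) p_odd => [|[|[|q]]].
rewrite /galnorm (eq_bigr (fun k : 'I_p => z ^+ k * alpha)) => [|k _]; last first.
  by rewrite sig_alpha.
rewrite big_split /= prodr_const card_ord alpha_p prodrXr.
rewrite -(big_mkord xpredT (fun k => k)) bin2_sum.
have /dvdnP[q ->] := prime_dvd_bin p_prime p_gt2.
by rewrite mulnC exprM (prim_expr_order z_prim) expr1n mul1r.
Qed.

(* The Lagrange resolvent
   s(c) = \sum_i (y sigma(y) ... sigma^(i-1)(y)) sigma^i(c) satisfies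
   y sigma(s(c)) = s(c), and is nonzero for some c = alpha^j by Dedekind. *)
Lemma hilbert90 (y : E) : galnorm y = 1 -> exists2 v, v != 0 & y * sig 1 v = v.
Proof.
move=> Ny; pose P i := \prod_(k < i) sig k y.
pose s c := \sum_(i < p) P i * sig i c.
have s_fix c : y * sig 1 (s c) = s c.
  have shift i : y * sig 1 (P i * sig i c) = P i.+1 * sig i.+1 c.
    rewrite sig_mul sig_succ mulrA /P big_ord_recl (sig_iter 0).
    rewrite (big_morph (sig 1) (sig_mul 1) (sig_one 1)).
    by congr (_ * _ * _); apply: eq_bigr => k _; rewrite sig_succ.
  rewrite /s linear_sum mulr_sumr; under eq_bigr => i _ do rewrite shift.
  rewrite -(prednK p_gt0) big_ord_recr big_ord_recl /= addrC prednK //.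
  by rewrite [P p]Ny sig_p /P big_ord0 (sig_iter 0).
have [/existsP[j sj_nz]|/existsPn s_zero] := boolP [exists j : 'I_p, s (alpha ^+ j) != 0].
  by exists (s (alpha ^+ j)).
have P0 : P 0%N = 0.
  apply: (sig_indep (w := fun i : 'I_p => P i) (leqnn p) _ (Ordinal p_gt0)) => j.
  by apply/eqP; rewrite -[_ == 0]negbK s_zero.
by move/eqP: P0; rewrite /P big_ord0 oner_eq0.
Qed.

Definition decomposable (x : E) := exists k (f : F) (y : E),
  [/\ f != 0, y != 0 & x = alpha ^+ k * f%:A * y ^+ p].

Lemma decomposable_ppow y : y != 0 -> decomposable (y ^+ p).
Proof. by move=> y0; exists 0%N, 1, y; rewrite oner_eq0 expr0 scale1r !mul1r. Qed.

Lemma decomposable_one : decomposable 1.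
Proof. by rewrite -(expr1n _ p); apply: decomposable_ppow; rewrite oner_eq0. Qed.

Lemma decomposable_mul u v :
  decomposable u -> decomposable v -> decomposable (u * v).
Proof.
move=> [k [f [y [f0 y0 ->]]]] [k' [f' [y' [f0' y0' ->]]]].
exists (k + k')%N, (f * f'), (y * y'); rewrite !mulf_neq0 //.
by split => //; rewrite exprD exprMn algM; ring.
Qed.

Lemma decomposable_exp u m : decomposable u -> decomposable (u ^+ m).
Proof.
move=> du; elim: m => [|m IH]; last by rewrite exprS; apply: decomposable_mul.
by rewrite expr0; apply: decomposable_one.
Qed.

Lemma decomposable_sig j u : decomposable u -> decomposable (sig j u).
Proof.
move=> [k [f [y [f0 y0 ->]]]].
exists k, (zeta ^+ (j * k) * f), (sig j y); rewrite sig_eq0 mulf_neq0 //; last first.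
  by rewrite expf_neq0 //; apply: contra_neq z_nz; rewrite /z => ->; rewrite scale0r.
split => //; rewrite !sig_mul sig_exp sig_alpha sig_alg sig_exp algM exprMn -exprM.
have -> : (zeta ^+ (j * k))%:A = z ^+ (j * k) by rewrite /z -in_algE rmorphXn.
ring.
Qed.

Let tau := twist (sig 1) p.-1.

Lemma decomposable_iter_tau j u : decomposable u -> decomposable (iter j tau u).
Proof.
move=> du; elim: j => [|j IH] //=.
by apply: decomposable_mul; [apply: decomposable_sig | apply: decomposable_exp].
Qed.

Lemma iter_tau_div j u v : iter j tau (u / v) = iter j tau u / iter j tau v.
Proof.
elim: j => [|j IH] //=; rewrite IH /tau /twist sig_mul sig_inv exprMn exprVn.
by rewrite invfM; ring.
Qed.

Lemma iter_tau_nz j u : u != 0 -> iter j tau u != 0.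
Proof.
by move=> u0; elim: j => [|j IH] //=; rewrite /tau /twist mulf_neq0 ?sig_eq0 ?expf_neq0.
Qed.

(* (sigma - 1)^p = sigma^p - 1 = 0 on E^*/E^*p. *)
Lemma decomposable_iter_tau_p s : s != 0 -> decomposable (iter p tau s).
Proof.
move=> s0; have [y Ty] : exists y, iter p tau s = y ^+ p.
  by apply: (iter_twist_prime (sig_mul 1) (sig_one 1) p_prime); rewrite -sig_iter sig_p.
rewrite Ty; apply: decomposable_ppow; apply: contra_neq (iter_tau_nz p s0) => y0.
by rewrite Ty y0 expr0n gtn_eqF.
Qed.

(* From now on p is odd (so that N(alpha) = a) and a is p-rigid. *)
Hypotheses (p_odd : odd p) (a_rigid : p_rigid_elt p a).

(* Rigidity + Hilbert 90: N(x) = a^k d^p, so x / (alpha^k d) has norm 1 and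
   equals v / sigma(v) = tau(v^-1) v^p, i.e. x is tau(s) modulo the subgroup. *)
Lemma decomposable_mod_tau x : x != 0 ->
  exists2 s, s != 0 & decomposable (x / tau s).
Proof.
move=> x0; have [_ [_ norms]] := a_rigid.
have [k _ [c [d [d0 ->]] Nx]] := norms E alpha hE x x0.
have w0 : alpha ^+ k * d%:A != 0 by rewrite mulf_neq0 ?expf_neq0 ?alpha_nz ?alg_nz.
have [|v v0 hv] := hilbert90 (y := x / (alpha ^+ k * d%:A)).
  rewrite galnorm_mul galnorm_inv galnorm_mul -fnorm_galnorm Nx galnorm_exp.
  rewrite galnorm_alpha // galnorm_alg -(rmorphXn (in_alg E)) -algM mulfV //.
  by rewrite alg_nz // mulf_neq0 ?expf_neq0.
have xE : x = alpha ^+ k * d%:A * (x / (alpha ^+ k * d%:A)) by rewrite mulrC divfK.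
exists v^-1; first by rewrite invr_eq0.
exists k, d, v; split => //.
have vp : v ^+ p = x / (alpha ^+ k * d%:A) * sig 1 v * v ^+ p.-1.
  by rewrite hv -exprS prednK.
by rewrite /tau /twist sig_inv exprVn -invfM invrK vp {1}xE; ring.
Qed.

Lemma decomposable_mod_iter_tau j x : x != 0 ->
  exists2 s, s != 0 & decomposable (x / iter j tau s).
Proof.
elim: j x => [|j IH] x x0.
  by exists x; rewrite //= mulfV //; apply: decomposable_one.
have [s s0 hs] := IH x x0; have [t t0 ht] := decomposable_mod_tau s0.
exists t => //; have := decomposable_iter_tau j ht; rewrite iter_tau_div -iterSr => h.
have -> : x / iter j.+1 tau t = x / iter j tau s * (iter j tau s / iter j.+1 tau t).
  by rewrite mulrA divfK ?iter_tau_nz.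
exact: decomposable_mul.
Qed.

Lemma decomposable_all x : x != 0 -> decomposable x.
Proof.
move=> x0; have [s s0 h] := decomposable_mod_iter_tau p x0.
by have := decomposable_mul h (decomposable_iter_tau_p s0); rewrite divfK ?iter_tau_nz.
Qed.

(* Directness: alpha^k is a p-th power modulo F^* only if p | k; otherwise
   taking norms gives a^k in F^*p, hence a in F^*p as p is prime. *)
Lemma alpha_pow_ppow k (f : F) : f != 0 ->
  is_ppow p (alpha ^+ k / f%:A) -> is_ppow p (alpha ^+ k).
Proof.
move=> f0 [y [y0 hy]].
have [/dvdnP[q ->]|p_ndvd_k] := boolP (p %| k)%N.
  by exists (alpha ^+ q); rewrite expf_neq0 ?alpha_nz // exprM.
exfalso; apply: a_npow.
have Ny_nz : fnorm y != 0.
  have : galnorm y != 0 by rewrite prodf_seq_neq0; apply/allP => k' _; rewrite sig_eq0.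
  by apply: contra_neq => Ny0; rewrite -fnorm_galnorm Ny0 scale0r.
have ak : a ^+ k = (f * fnorm y) ^+ p.
  apply: (fmorph_inj (in_alg E)); rewrite !rmorphXn rmorphM /= fnorm_galnorm.
  move/(congr1 galnorm): hy; rewrite galnorm_mul galnorm_inv galnorm_exp galnorm_alpha //.
  rewrite galnorm_alg galnorm_exp => /(canRL (divfK (alg_nz (expf_neq0 p f0)))) ->.
  by rewrite exprMn mulrC -(rmorphXn (in_alg E)).
apply: (@coprime_pow_closed F (is_ppow p) a k p) => //.
- by move=> u v [u' [u0 ->]] [v' [v0 ->]]; exists (u' * v'); rewrite mulf_neq0 // exprMn.
- by move=> u [u' [u0 ->]]; exists u'^-1; rewrite invr_eq0 exprVn.
- by rewrite prime_coprime.
- by exists (f * fnorm y); rewrite mulf_neq0.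
- by exists a.
Qed.
End KummerExtension.

Unset Implicit Arguments.
Set Strict Implicit.

Theorem lemma3p14 (F : fieldType) (p : nat)
  (p_prime : prime p) (p_odd : odd p)
  (zeta : F) (zeta_prim : p.-primitive_root zeta)
  (Frigid : p_rigid_field F p)
  (a : F) (a_nz : a != 0) (a_npow : ~ is_ppow p a)
  (E : fieldExtType F) (alpha : E) (hE : is_pure_ext p a alpha) :
  (* spanning: \dot E/\dot E^p = <[alpha]> * epsilon(\dot F/\dot F^p) *)
  (forall x : E, x != 0 ->
     exists (k : nat) (f : F), f != 0 /\
       is_ppow p (x / (alpha ^+ k * f%:A))) /\
  (* directness: <[alpha]_E> \cap epsilon(\dot F/\dot F^p) is trivial *)
  (forall (k : nat) (f : F), f != 0 ->
     is_ppow p (alpha ^+ k / f%:A) -> is_ppow p (alpha ^+ k)).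
Proof.
have a_rigid := Frigid a a_nz a_npow.
split => [x x0 | k f f0].
  have [k [f [y [f0 y0 ->]]]] :=
    decomposable_all p_prime zeta_prim a_nz a_npow hE p_odd a_rigid x0.
  exists k, f; split => //; exists y; split => //.
  by rewrite mulrC mulKf // mulf_neq0 ?expf_neq0 ?(alpha_nz p_prime a_nz hE) ?alg_nz.
exact: (alpha_pow_ppow p_prime zeta_prim a_nz a_npow hE p_odd f0).
Qed.
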